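(* Let $n,m\ge 1$, let $A_1,\ldots,A_m$ be real symmetric $n\times n$ matrices and $a_1,\ldots,a_m\in\mathbb{R}^n$, and define $f:\mathbb{R}^n\to\mathbb{R}^m$ by $f(x)=(f_1(x),\ldots,f_m(x))$ with $f_i(x)=\frac12 x^TA_ix+a_i^Tx$. Let $A=[a_1~\ldots~a_m]\in\mathbb{R}^{n\times m}$ and set $$L:=\sqrt{\sum_{i=1}^m\|A_i\|^2},\qquad L_{\rm new}:=\sqrt{\lambda_{\max}\Big(\sum_{i=1}^mA_i^TA_i\Big)},\qquad \nu:=\sigma_{\min}(A)=\sqrt{\lambda_{\min}(A^TA)},$$ where $\|A_i\|=\sqrt{\lambda_{\max}(A_i^TA_i)}$ is the spectral norm. Assume $L_{\rm new}>0$. Then $L_{\rm new}\le L$, and for every $\epsilon<\epsilon^*_{\rm new}:=\nu/(2L_{\rm new})$ the set $$F_m(\epsilon)=\{f(x):~x\in\mathbb{R}^n,~\|x\|\le\epsilon\}$$ is a convex subset of $\mathbb{R}^m$.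
   Context: $\|\cdot\|$ on vectors is the Euclidean norm. $\lambda_{\max},\lambda_{\min}$ denote the largest and smallest eigenvalue of a symmetric matrix, and $\sigma_{\min}(A)$ denotes the smallest singular value of $A$, defined as $\sqrt{\lambda_{\min}(A^TA)}$. *)

From HB Require Import structures.
From mathcomp Require Import all_boot all_order all_algebra.
From mathcomp Require Import all_classical all_reals all_analysis.
Set Implicit Arguments. Unset Strict Implicit. Unset Printing Implicit Defensive.
Import Order.TTheory GRing.Theory Num.Theory.
Local Open Scope ring_scope.
Local Open Scope classical_set_scope.

(* For a real symmetric matrix
   the (real) eigenvalues form a finite nonempty set; lambda_max / lambda_min
   are its largest / smallest element, taken as sup / inf over the reals. *)
Definition lambda_max (R : realType) (n : nat) (M : 'M[R]_n) : R :=
  sup [set a : R | eigenvalue M a].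
Definition lambda_min (R : realType) (n : nat) (M : 'M[R]_n) : R :=
  inf [set a : R | eigenvalue M a].

Definition enorm (R : realType) (n : nat) (x : 'cV[R]_n) : R :=
  Num.sqrt (\sum_(i < n) x i 0 ^+ 2).

Definition spec_norm (R : realType) (n : nat) (B : 'M[R]_n) : R :=
  Num.sqrt (lambda_max (B^T *m B)).

Definition sigma_min (R : realType) (n m : nat) (A : 'M[R]_(n, m)) : R :=
  Num.sqrt (lambda_min (A^T *m A)).

Definition quadmap (R : realType) (n m : nat) (As : 'I_m -> 'M[R]_n)
  (A : 'M[R]_(n, m)) (x : 'cV[R]_n) : 'cV[R]_m :=
  \col_(i < m) (2^-1 * (x^T *m As i *m x) 0 0 + ((col i A)^T *m x) 0 0).

Definition Fset (R : realType) (n m : nat) (As : 'I_m -> 'M[R]_n)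
  (A : 'M[R]_(n, m)) (eps : R) : set 'cV[R]_m :=
  [set quadmap As A x | x in [set x : 'cV[R]_n | enorm x <= eps]].

From HB Require Import structures.
From mathcomp Require Import all_boot all_order all_algebra.
From mathcomp Require Import all_classical all_reals all_analysis.
From mathcomp Require Import ring lra.
Import Order.TTheory GRing.Theory Num.Theory.
Import numFieldTopology.Exports numFieldNormedType.Exports.

(* Write F for the quadratic map and y = l F x1 + (1 - l) F x2 for x1, x2 in
   the eps-ball.  At z = x2 + l (x1 - x2) the exact Taylor expansion of F gives
   F z - y = -(l (1 - l) / 2) q(x1 - x2) with q(h) = (h^T A_i h)_i, so
   |F z - y| <= l (1 - l) L_new |x1 - x2|^2 / 2, while the parallelogram identity
   |z|^2 = l |x1|^2 + (1 - l) |x2|^2 - l (1 - l) |x1 - x2|^2 leaves a margin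
   r = eps - |z| with l (1 - l) |x1 - x2|^2 <= 2 eps r.  On the eps-ball the
   adjoint Jacobian is bounded below by nu - L_new eps > L_new eps, and a
   Graves-type argument (minimise |F x - y| + c |x - z| over the r-ball around
   z; a minimiser with F x <> y could be improved along -J(x)^T (F x - y))
   produces a preimage of y in the eps-ball.  Both L_new <= L and the Jacobian
   bound reduce to Rayleigh-quotient characterisations of lambda_max and
   lambda_min, obtained by maximising the quadratic form on the unit sphere. *)

Set Implicit Arguments.
Unset Strict Implicit.
Unset Printing Implicit Defensive.

Local Open Scope ring_scope.
Local Open Scope classical_set_scope.

Section Euclidean.
Variables (R : realType) (k : nat).
Implicit Types (u v w : 'cV[R]_k) (a b t : R).

Definition vdot u v : R := (u^T *m v) 0 0.
Definition vnorm u : R := Num.sqrt (vdot u u).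

Lemma vdotE u v : vdot u v = \sum_i u i 0 * v i 0.
Proof. by rewrite /vdot mxE; apply: eq_bigr => i _; rewrite mxE. Qed.

Lemma vdotC u v : vdot u v = vdot v u.
Proof. by rewrite !vdotE; apply: eq_bigr => i _; rewrite mulrC. Qed.

Lemma vdotDl u v w : vdot (u + v) w = vdot u w + vdot v w.
Proof. by rewrite !vdotE -big_split; apply: eq_bigr => i _; rewrite mxE mulrDl. Qed.

Lemma vdotDr u v w : vdot w (u + v) = vdot w u + vdot w v.
Proof. by rewrite vdotC vdotDl !(vdotC w). Qed.

Lemma vdotZl a u v : vdot (a *: u) v = a * vdot u v.
Proof. by rewrite !vdotE mulr_sumr; apply: eq_bigr => i _; rewrite mxE mulrA. Qed.

Lemma vdotZr a u v : vdot v (a *: u) = a * vdot v u.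
Proof. by rewrite vdotC vdotZl vdotC. Qed.

Lemma vdotNl u v : vdot (- u) v = - vdot u v.
Proof. by rewrite -scaleN1r vdotZl mulN1r. Qed.

Lemma vdotNr u v : vdot v (- u) = - vdot v u.
Proof. by rewrite vdotC vdotNl vdotC. Qed.

Lemma vdotBl u v w : vdot (u - v) w = vdot u w - vdot v w.
Proof. by rewrite vdotDl vdotNl. Qed.

Lemma vdotBr u v w : vdot w (u - v) = vdot w u - vdot w v.
Proof. by rewrite vdotDr vdotNr. Qed.

Lemma vdot0l u : vdot 0 u = 0.
Proof. by rewrite -(scale0r 0) vdotZl mul0r. Qed.

Lemma vdot0r u : vdot u 0 = 0.
Proof. by rewrite vdotC vdot0l. Qed.

Lemma vdot_suml (I : finType) (F : I -> 'cV[R]_k) v :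
  vdot (\sum_i F i) v = \sum_i vdot (F i) v.
Proof. exact: (big_morph (vdot^~ v) (fun x y => vdotDl x y v) (vdot0l v)). Qed.

Lemma vdot_sumr (I : finType) (F : I -> 'cV[R]_k) v :
  vdot v (\sum_i F i) = \sum_i vdot v (F i).
Proof. by rewrite vdotC vdot_suml; apply: eq_bigr => i _; rewrite vdotC. Qed.

Lemma vdot_ge0 u : 0 <= vdot u u.
Proof. by rewrite vdotE sumr_ge0 // => i _; rewrite -expr2 sqr_ge0. Qed.

Lemma vdot_eq0 u : (vdot u u == 0) = (u == 0).
Proof.
apply/idP/eqP => [|->]; last by rewrite vdot0l.
rewrite vdotE psumr_eq0 => [/allP u0|i _]; last by rewrite -expr2 sqr_ge0.
apply/matrixP => i j; rewrite ord1 mxE.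
by have /u0 := mem_index_enum i; rewrite /= -expr2 sqrf_eq0 => /eqP.
Qed.

Lemma vdot_gt0 u : (0 < vdot u u) = (u != 0).
Proof. by rewrite lt_def vdot_eq0 vdot_ge0 andbT. Qed.

Lemma vdot_CauchySchwarz u v : vdot u v ^+ 2 <= vdot u u * vdot v v.
Proof.
have [->|v0] := eqVneq v 0; first by rewrite !vdot0r expr0n /= mulr0.
have vv0 : 0 < vdot v v by rewrite vdot_gt0.
rewrite -ler_pdivrMr //.
have := vdot_ge0 (u - (vdot u v / vdot v v) *: v).
rewrite !vdotBl !vdotBr !vdotZl !vdotZr (vdotC v u).
have -> : vdot u v / vdot v v * (vdot u v / vdot v v * vdot v v)
          = vdot u v ^+ 2 / vdot v v by field; rewrite gt_eqF.
have -> : vdot u v / vdot v v * vdot u v = vdot u v ^+ 2 / vdot v v.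
  by rewrite mulrAC expr2.
lra.
Qed.

Lemma vnorm_ge0 u : 0 <= vnorm u.
Proof. exact: sqrtr_ge0. Qed.

Lemma vnorm_sqr u : vnorm u ^+ 2 = vdot u u.
Proof. by rewrite sqr_sqrtr // vdot_ge0. Qed.

Lemma enorm_vnorm u : enorm u = vnorm u.
Proof.
by rewrite /enorm /vnorm vdotE; congr Num.sqrt; apply: eq_bigr => i _; rewrite expr2.
Qed.

Lemma vnorm_eq0 u : (vnorm u == 0) = (u == 0).
Proof. by rewrite sqrtr_eq0 le_eqVlt ltNge vdot_ge0 orbF vdot_eq0. Qed.

Lemma vnorm_gt0 u : (0 < vnorm u) = (u != 0).
Proof. by rewrite sqrtr_gt0 vdot_gt0. Qed.

Lemma vnorm0 : vnorm 0 = 0.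
Proof. by apply/eqP; rewrite vnorm_eq0. Qed.

Lemma vnorm_le_sqr u b : 0 <= b -> vdot u u <= b ^+ 2 -> vnorm u <= b.
Proof. by move=> b0 ub; rewrite -ler_sqr ?nnegrE ?vnorm_ge0 // vnorm_sqr. Qed.

Lemma vnormZ a u : vnorm (a *: u) = `|a| * vnorm u.
Proof. by rewrite /vnorm vdotZl vdotZr mulrA -expr2 sqrtrM ?sqr_ge0 // sqrtr_sqr. Qed.

Lemma vnormN u : vnorm (- u) = vnorm u.
Proof. by rewrite /vnorm vdotNl vdotNr opprK. Qed.

Lemma ler_vdot u v : vdot u v <= vnorm u * vnorm v.
Proof.
apply: le_trans (ler_norm _) _.
rewrite -ler_sqr ?nnegrE ?mulr_ge0 ?vnorm_ge0 //.
by rewrite exprMn !vnorm_sqr real_normK ?num_real // vdot_CauchySchwarz.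
Qed.

Lemma ler_vnormD u v : vnorm (u + v) <= vnorm u + vnorm v.
Proof.
rewrite -ler_sqr ?nnegrE ?addr_ge0 ?vnorm_ge0 //.
rewrite vnorm_sqr sqrrD !vnorm_sqr vdotDl !vdotDr (vdotC v u).
have := ler_vdot u v; lra.
Qed.

Lemma ler_vnorm_coord u i : `|u i 0| <= vnorm u.
Proof.
rewrite -ler_sqr ?nnegrE ?vnorm_ge0 // vnorm_sqr real_normK ?num_real // vdotE.
rewrite (bigD1 i) //= -expr2 lerDl sumr_ge0 // => j _.
by rewrite -expr2 sqr_ge0.
Qed.

(* The square of the right-hand side exceeds [vnorm (u - t *: v) ^+ 2] by a sum
   of three terms, one of which is nonnegative only thanks to the hypothesis. *)
Lemma vnorm_descent u v t : u != 0 -> 0 <= t ->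
  2 * t * vdot u v <= vdot u u ->
  vnorm (u - t *: v) <=
    vnorm u - t * (vdot u v / vnorm u) + t ^+ 2 * (vdot v v / vnorm u).
Proof.
move=> u0 t0 ht; set E := vnorm u; have E0 : 0 < E by rewrite /E vnorm_gt0.
set a := vdot u v / E; set K := vdot v v / E.
have aE : vdot u v = a * E by rewrite /a mulrVK // unitfE gt_eqF.
have KE : vdot v v = K * E by rewrite /K mulrVK // unitfE gt_eqF.
have K0 : 0 <= K by rewrite /K divr_ge0 ?vdot_ge0 // ltW.
have uu : vdot u u = E * E by rewrite -vnorm_sqr expr2.
have hta : 2 * t * a <= E.
  by rewrite -(ler_pM2r E0) -uu; apply: le_trans ht; rewrite aE mulrA.
have tK : 0 <= t ^+ 2 * K by rewrite mulr_ge0 ?sqr_ge0.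
apply: vnorm_le_sqr; first lra.
rewrite vdotBl !vdotBr !vdotZl !vdotZr (vdotC v u) aE KE uu -subr_ge0.
have -> : (E - t * a + t ^+ 2 * K) ^+ 2 -
    (E * E - t * (a * E) - (t * (a * E) - t * (t * (K * E)))) =
  (t * a) ^+ 2 + t ^+ 2 * K * (E - 2 * t * a) + (t ^+ 2 * K) ^+ 2 by ring.
have : 0 <= E - 2 * t * a by rewrite subr_ge0.
move/(mulr_ge0 tK).
by have := sqr_ge0 (t * a); have := sqr_ge0 (t ^+ 2 * K); lra.
Qed.

Lemma vdot_lerp (x d : 'cV[R]_k) (l : R) :
  vdot (x + l *: d) (x + l *: d) =
  l * vdot (x + d) (x + d) + (1 - l) * vdot x x - l * (1 - l) * vdot d d.
Proof. by rewrite !vdotDl !vdotDr !vdotZl !vdotZr (vdotC d x); ring. Qed.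

End Euclidean.

Lemma vdot_mulmx (R : realType) p k (M : 'M[R]_(p, k)) (u : 'cV[R]_p) v :
  vdot u (M *m v) = vdot (M^T *m u) v.
Proof. by rewrite /vdot trmx_mul trmxK mulmxA. Qed.

Lemma vnorm_sum_le (R : realType) k (I : finType) (F : I -> 'cV[R]_k) :
  vnorm (\sum_i F i) <= \sum_i vnorm (F i).
Proof.
apply: (big_ind2 (fun u a => vnorm u <= a)) => [|u a v b ua vb|//].
  by rewrite vnorm0.
exact: le_trans (ler_vnormD u v) (lerD ua vb).
Qed.

Lemma vnorm_lincomb_le (R : realType) p k (w : 'cV[R]_p) (v : 'I_p -> 'cV[R]_k) :
  vnorm (\sum_i w i 0 *: v i) <= vnorm w * Num.sqrt (\sum_i vdot (v i) (v i)).
Proof.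
apply: le_trans (vnorm_sum_le _) _; under eq_bigr do rewrite vnormZ.
set a := \col_i `|w i 0|; set b := \col_i vnorm (v i).
have -> : \sum_i `|w i 0| * vnorm (v i) = vdot a b.
  by rewrite vdotE; apply: eq_bigr => i _; rewrite !mxE.
have -> : vnorm w = vnorm a.
  congr Num.sqrt; rewrite !vdotE; apply: eq_bigr => i _.
  by rewrite !mxE -normrM ger0_norm // -expr2 sqr_ge0.
have -> : Num.sqrt (\sum_i vdot (v i) (v i)) = vnorm b.
  by congr Num.sqrt; rewrite vdotE; apply: eq_bigr => i _; rewrite mxE -expr2 vnorm_sqr.
exact: ler_vdot.
Qed.

Section ColumnContinuity.
Variables (R : realType) (k : nat).

(* Compactness and the extreme value theorem are available for row vectors
   ([bounded_closed_compact], [EVT_min_rV]), so continuity of functions of a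
   column vector is phrased through the transpose. *)
Definition cV_continuous (f : 'cV[R]_k -> R) :=
  continuous (fun u : 'rV[R]_k => f u^T).

Definition cV_continuous_vec p (F : 'cV[R]_k -> 'cV[R]_p) :=
  forall i, cV_continuous (fun x => F x i 0).

Lemma eq_cV_continuous (f g : 'cV[R]_k -> R) :
  f =1 g -> cV_continuous f -> cV_continuous g.
Proof.
by move=> fg; rewrite /cV_continuous (_ : (fun u => g _) = (fun u => f u^T)) //;
  apply: funext => u; rewrite fg.
Qed.

Lemma cV_continuous_coord i : cV_continuous (fun x => x i 0).
Proof.
rewrite /cV_continuous (_ : (fun u => _) = (fun u : 'rV[R]_k => u 0 i)).
  exact: coord_continuous.
by apply: funext => u; rewrite mxE.
Qed.

Lemma cV_continuous_cst (c : R) : cV_continuous (fun=> c).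
Proof. exact: cst_continuous. Qed.

Lemma cV_continuousD (f g : 'cV[R]_k -> R) :
  cV_continuous f -> cV_continuous g -> cV_continuous (fun x => f x + g x).
Proof. by move=> cf cg u; apply: continuousD; [exact: cf | exact: cg]. Qed.

Lemma cV_continuousM (f g : 'cV[R]_k -> R) :
  cV_continuous f -> cV_continuous g -> cV_continuous (fun x => f x * g x).
Proof. by move=> cf cg u; apply: continuousM; [exact: cf | exact: cg]. Qed.

Lemma cV_continuousN (f : 'cV[R]_k -> R) :
  cV_continuous f -> cV_continuous (fun x => - f x).
Proof. by move=> cf u; apply: continuousN; exact: cf. Qed.

Lemma cV_continuousB (f g : 'cV[R]_k -> R) :
  cV_continuous f -> cV_continuous g -> cV_continuous (fun x => f x - g x).
Proof. by move=> cf cg; apply: cV_continuousD => //; exact: cV_continuousN. Qed.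

Lemma cV_continuous_sqrt (f : 'cV[R]_k -> R) :
  cV_continuous f -> cV_continuous (fun x => Num.sqrt (f x)).
Proof.
move=> cf u; apply: (continuous_comp (f := fun u : 'rV[R]_k => f u^T)).
  exact: cf.
exact: sqrt_continuous.
Qed.

Lemma cV_continuous_sum (I : finType) (f : I -> 'cV[R]_k -> R) :
  (forall i, cV_continuous (f i)) -> cV_continuous (fun x => \sum_i f i x).
Proof.
move=> cf; apply: (@continuous_big _ _ +%R 0 xpredT add_continuous _ _
  (fun i (u : 'rV[R]_k) => f i u^T)) => i _; exact: cf.
Qed.

Lemma cV_continuous_id : cV_continuous_vec (fun x => x).
Proof. exact: cV_continuous_coord. Qed.

Lemma cV_continuous_vec_cst p (c : 'cV[R]_p) : cV_continuous_vec (fun=> c).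
Proof. by move=> i; exact: cV_continuous_cst. Qed.

Lemma cV_continuous_vecB p (F G : 'cV[R]_k -> 'cV[R]_p) :
  cV_continuous_vec F -> cV_continuous_vec G -> cV_continuous_vec (fun x => F x - G x).
Proof.
move=> cF cG i; apply: (eq_cV_continuous (f := fun x => F x i 0 - G x i 0)).
  by move=> x; rewrite !mxE.
exact: cV_continuousB.
Qed.

Lemma cV_continuous_mulmx p q (M : 'M[R]_(q, p)) (F : 'cV[R]_k -> 'cV[R]_p) :
  cV_continuous_vec F -> cV_continuous_vec (fun x => M *m F x).
Proof.
move=> cF i; apply: (eq_cV_continuous (f := fun x => \sum_j M i j * F x j 0)).
  by move=> x; rewrite mxE.
apply: cV_continuous_sum => j.
by apply: cV_continuousM; [exact: cV_continuous_cst | exact: cF].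
Qed.

Lemma cV_continuous_vdot p (F G : 'cV[R]_k -> 'cV[R]_p) :
  cV_continuous_vec F -> cV_continuous_vec G -> cV_continuous (fun x => vdot (F x) (G x)).
Proof.
move=> cF cG; apply: (eq_cV_continuous (f := fun x => \sum_i F x i 0 * G x i 0)).
  by move=> x; rewrite vdotE.
by apply: cV_continuous_sum => i; apply: cV_continuousM; [exact: cF | exact: cG].
Qed.

Lemma cV_continuous_vnorm p (F : 'cV[R]_k -> 'cV[R]_p) :
  cV_continuous_vec F -> cV_continuous (fun x => vnorm (F x)).
Proof. by move=> cF; apply: cV_continuous_sqrt; exact: cV_continuous_vdot. Qed.

Lemma cV_EVT_min (f h : 'cV[R]_k -> R) (B : R) :
  cV_continuous f -> cV_continuous h -> (exists x0, h x0 <= 0) ->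
  (forall x, h x <= 0 -> vnorm x <= B) ->
  exists2 x, h x <= 0 & forall y, h y <= 0 -> f x <= f y.
Proof.
move=> cf ch [x0 hx0] hB.
pose S := [set u : 'rV[R]_k | h u^T <= 0].
have S0 : S !=set0 by exists x0^T; rewrite /S /= trmxK.
have cS : compact S.
  apply: bounded_closed_compact.
    exists B; split; first by rewrite num_real.
    move=> M BM u Su /=; rewrite /Num.Def.normr /= mx_normrE.
    have uB : vnorm u^T < M by apply: le_lt_trans (hB _ Su) BM.
    apply: bigmax_le => [|[i j] _ /=]; first exact/ltW/(le_lt_trans (vnorm_ge0 _) uB).
    apply: ltW; apply: le_lt_trans uB; rewrite ord1.
    by have := ler_vnorm_coord u^T j; rewrite mxE.
  apply: (preimage_closed (f := fun u : 'rV[R]_k => h u^T) (D := [set r : R | r <= 0])).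
    by move=> u _; exact: ch.
  exact: closed_le.
have [c Sc cmin] := EVT_min_rV S0 cS (continuous_subspaceT cf).
exists c^T; first by move: Sc; rewrite inE.
by move=> y hy; have := cmin y^T; rewrite trmxK; apply; rewrite inE /S /= trmxK.
Qed.

End ColumnContinuity.

Lemma sup_eq_max (R : realType) (E : set R) x : E x -> ubound E x -> sup E = x.
Proof.
move=> Ex ubx; apply/le_anti; rewrite ge_sup //=; last by exists x.
by apply: sup_upper_bound => //; split; exists x.
Qed.

Section Rayleigh.
Variables (R : realType) (k : nat).
Implicit Types (M S : 'M[R]_k) (x v : 'cV[R]_k).

Lemma vdot_sym_mulmx S x v : S^T = S -> vdot x (S *m v) = vdot v (S *m x).
Proof. by move=> symS; rewrite vdot_mulmx symS vdotC. Qed.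

Lemma vdot_sym_mulmxD S x v : S^T = S ->
  vdot (x + v) (S *m (x + v)) = vdot x (S *m x) + 2 * vdot v (S *m x) + vdot v (S *m v).
Proof. by move=> symS; rewrite mulmxDr !vdotDl !vdotDr (vdot_sym_mulmx x v symS); ring. Qed.

(* Evaluate the form at [v - a / (b + 1) *: S v] with [a = |S v|^2]: the value
   [- a^2 (b + 2) / (b + 1)^2] can only be nonnegative when [a = 0]. *)
Lemma psd_form_eq0 S v : S^T = S -> (forall x, 0 <= vdot x (S *m x)) ->
  vdot v (S *m v) = 0 -> S *m v = 0.
Proof.
move=> symS psdS Sv0; apply/eqP; rewrite -vdot_eq0.
set w := S *m v; set a := vdot w w; set b := vdot w (S *m w).
have b1 : 0 < b + 1 by rewrite ltr_wpDl ?psdS.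
have := psdS (v + (- a / (b + 1)) *: w).
rewrite vdot_sym_mulmxD // Sv0 -scalemxAr !vdotZl !vdotZr -/a -/b.
have -> : 0 + 2 * (- a / (b + 1) * a) + - a / (b + 1) * (- a / (b + 1) * b)
          = - (a ^+ 2 * (b + 2)) / (b + 1) ^+ 2 by field; rewrite gt_eqF.
rewrite pmulr_lge0 ?invr_gt0 ?exprn_gt0 // oppr_ge0 pmulr_lle0 ?ltr_wpDl ?psdS //.
by rewrite -sqrf_eq0 eq_le sqr_ge0 andbT.
Qed.

Lemma sym_eigenvalue_col M a : M^T = M ->
  eigenvalue M a -> exists2 v : 'cV[R]_k, v != 0 & M *m v = a *: v.
Proof.
move=> symM /eigenvalueP [u uM u0]; exists u^T; first by rewrite trmx_eq0.
by rewrite -symM -trmx_mul uM linearZ.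
Qed.

Lemma quadform_le_unit M c :
  (forall x, vdot x x = 1 -> vdot x (M *m x) <= c) ->
  forall x, vdot x (M *m x) <= c * vdot x x.
Proof.
move=> unit_le x; have [->|x0] := eqVneq x 0; first by rewrite !vdot0l mulr0.
have nx0 : 0 < vnorm x by rewrite vnorm_gt0.
set u := (vnorm x)^-1 *: x.
have xE : x = vnorm x *: u by rewrite scalerA divff ?gt_eqF // scale1r.
have u1 : vdot u u = 1.
  by rewrite vdotZl vdotZr -vnorm_sqr; field; rewrite gt_eqF.
have -> : vdot x (M *m x) = vnorm x ^+ 2 * vdot u (M *m u).
  by rewrite {1 2}xE -scalemxAr vdotZl vdotZr mulrA -expr2.
by rewrite -vnorm_sqr mulrC; apply: ler_wpM2r; rewrite ?sqr_ge0 ?unit_le.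
Qed.

(* [c%:M - M] is positive semidefinite and its form vanishes at [v]. *)
Lemma quadform_max_eigenvector M c v : M^T = M ->
  (forall x, vdot x (M *m x) <= c * vdot x x) ->
  vdot v v = 1 -> vdot v (M *m v) = c -> M *m v = c *: v.
Proof.
move=> symM le_c v1 Mvc.
have SE x : (c%:M - M) *m x = c *: x - M *m x by rewrite mulmxBl mul_scalar_mx.
apply/eqP; rewrite eq_sym -subr_eq0 -SE; apply/eqP/psd_form_eq0.
- by rewrite linearB /= tr_scalar_mx symM.
- by move=> x; rewrite SE vdotBr vdotZr subr_ge0 le_c.
- by rewrite SE vdotBr vdotZr v1 Mvc mulr1 subrr.
Qed.

Lemma lambda_minE M : lambda_min M = - lambda_max (- M).
Proof.
rewrite /lambda_min /inf /lambda_max; congr (- sup _).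
apply/seteqP; split=> a /=.
  move=> [b Mb <-]; apply/eigenvalueP; have /eigenvalueP [u uM u0] := Mb.
  by exists u; rewrite // mulmxN uM scaleNr.
move=> /eigenvalueP [u uM u0]; exists (- a); rewrite ?opprK //.
by apply/eigenvalueP; exists u; rewrite // scaleNr -uM mulmxN opprK.
Qed.

Hypothesis k_gt0 : (0 < k)%N.

Lemma quadform_max_sphere M : exists2 v : 'cV[R]_k, vdot v v = 1 &
  forall x, vdot x x = 1 -> vdot x (M *m x) <= vdot v (M *m v).
Proof.
pose h x := (vdot x x - 1) ^+ 2.
have hP x : h x <= 0 -> vdot x x = 1.
  by move=> hx; apply/eqP; rewrite -subr_eq0 -sqrf_eq0 eq_le hx sqr_ge0.
have cf : cV_continuous (fun x => - vdot x (M *m x)).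
  by apply/cV_continuousN/cV_continuous_vdot/cV_continuous_mulmx/cV_continuous_id;
    exact: cV_continuous_id.
have ch : cV_continuous h.
  apply: (eq_cV_continuous (f := fun x => (vdot x x - 1) * (vdot x x - 1))).
    by move=> x; rewrite /h expr2.
  have cq : cV_continuous (fun x : 'cV[R]_k => vdot x x - 1).
    by apply: (cV_continuousB _ (@cV_continuous_cst _ _ 1)); apply: cV_continuous_vdot;
      exact: cV_continuous_id.
  exact: cV_continuousM.
have [x0 hx0] : exists x0, h x0 <= 0.
  pose e : 'cV[R]_k := delta_mx (Ordinal k_gt0) 0.
  exists e; rewrite /h vdotE (bigD1 (Ordinal k_gt0)) //= big1 => [|i /negbTE ni].
    by rewrite !mxE !eqxx mulr1 addr0 subrr expr0n.
  by rewrite !mxE ni mul0r.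
have hB x : h x <= 0 -> vnorm x <= 1.
  by move/hP=> x1; apply: vnorm_le_sqr; rewrite ?ler01 // x1 expr1n.
have [v /hP v1 vmin] := cV_EVT_min cf ch (ex_intro _ x0 hx0) hB.
exists v => // x x1; rewrite -lerN2; apply: vmin.
by rewrite /h x1 subrr expr0n.
Qed.

Lemma lambda_max_rayleigh M : M^T = M ->
  (exists2 v : 'cV[R]_k, v != 0 & M *m v = lambda_max M *: v) /\
  forall x, vdot x (M *m x) <= lambda_max M * vdot x x.
Proof.
move=> symM; have [v v1 vmax] := quadform_max_sphere M.
have le_c := quadform_le_unit vmax.
have Mv := quadform_max_eigenvector symM le_c v1 erefl.
move: le_c Mv; set c := vdot v (M *m v) => le_c Mv.
have v0 : v != 0 by rewrite -vdot_eq0 v1 oner_eq0.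
suff -> : lambda_max M = c by split => //; exists v.
apply: sup_eq_max => [|a /(sym_eigenvalue_col symM) [u u0 Mu]] /=.
  apply/eigenvalueP; exists v^T; rewrite ?trmx_eq0 //.
  by rewrite -{1}symM -trmx_mul Mv linearZ.
by have := le_c u; rewrite Mu vdotZr ler_pM2r ?vdot_gt0.
Qed.

Lemma lambda_min_rayleigh M : M^T = M ->
  forall x, lambda_min M * vdot x x <= vdot x (M *m x).
Proof.
move=> symM x; have symN : (- M)^T = - M by rewrite linearN /= symM.
have [_ le_max] := lambda_max_rayleigh symN.
by rewrite lambda_minE mulNr lerNl -vdotNr -mulNmx le_max.
Qed.

Lemma lambda_max_ge0 M : M^T = M -> (forall x, 0 <= vdot x (M *m x)) ->
  0 <= lambda_max M.
Proof.
move=> symM psdM; have [[v v0 Mv] _] := lambda_max_rayleigh symM.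
by have := psdM v; rewrite Mv vdotZr pmulr_lge0 ?vdot_gt0.
Qed.

Lemma lambda_max_sum_le (I : finType) (Ms : I -> 'M[R]_k) :
  (forall i, (Ms i)^T = Ms i) ->
  lambda_max (\sum_i Ms i) <= \sum_i lambda_max (Ms i).
Proof.
move=> symMs; have symS : (\sum_i Ms i)^T = \sum_i Ms i.
  by rewrite linear_sum; apply: eq_bigr => i _; exact: symMs.
have [[v v0 Sv] _] := lambda_max_rayleigh symS.
have vv0 : 0 < vdot v v by rewrite vdot_gt0.
rewrite -(ler_pM2r vv0).
rewrite -vdotZr -Sv mulmx_suml vdot_sumr mulr_suml ler_sum // => i _.
by have [_] := lambda_max_rayleigh (symMs i); apply.
Qed.

End Rayleigh.

Lemma trmx_gram (R : realType) p k (B : 'M[R]_(p, k)) : (B^T *m B)^T = B^T *m B.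
Proof. by rewrite trmx_mul trmxK. Qed.

Lemma vdot_gram (R : realType) p k (B : 'M[R]_(p, k)) (x : 'cV[R]_k) :
  vdot x ((B^T *m B) *m x) = vdot (B *m x) (B *m x).
Proof. by rewrite -mulmxA vdot_mulmx trmxK. Qed.

Lemma vdot_sum_gram (R : realType) (I : finType) p k (B : I -> 'M[R]_(p, k))
    (x : 'cV[R]_k) :
  vdot x ((\sum_i (B i)^T *m B i) *m x) = \sum_i vdot (B i *m x) (B i *m x).
Proof. by rewrite mulmx_suml vdot_sumr; apply: eq_bigr => i _; exact: vdot_gram. Qed.

Lemma trmx_sum_gram (R : realType) (I : finType) p k (B : I -> 'M[R]_(p, k)) :
  (\sum_i (B i)^T *m B i)^T = \sum_i (B i)^T *m B i.
Proof. by rewrite linear_sum; apply: eq_bigr => i _; exact: trmx_gram. Qed.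

Lemma lambda_max_gram_ge0 (R : realType) p k (B : 'M[R]_(p, k)) :
  (0 < k)%N -> 0 <= lambda_max (B^T *m B).
Proof.
by move=> k_gt0; apply: lambda_max_ge0 => // [|x]; rewrite ?trmx_gram ?vdot_gram ?vdot_ge0.
Qed.

Lemma lambda_max_sum_gram_ge0 (R : realType) (I : finType) p k (B : I -> 'M[R]_(p, k)) :
  (0 < k)%N -> 0 <= lambda_max (\sum_i (B i)^T *m B i).
Proof.
move=> k_gt0; apply: lambda_max_ge0 => // [|x]; first exact: trmx_sum_gram.
by rewrite vdot_sum_gram sumr_ge0 // => i _; exact: vdot_ge0.
Qed.

Lemma sigma_min_le (R : realType) p k (B : 'M[R]_(p, k)) (w : 'cV[R]_k) :
  (0 < k)%N -> sigma_min B * vnorm w <= vnorm (B *m w).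
Proof.
move=> k_gt0; rewrite /sigma_min.
have [l_ge0|l_lt0] := leP 0 (lambda_min (B^T *m B)); last first.
  by rewrite ltr0_sqrtr // mul0r vnorm_ge0.
rewrite -ler_sqr ?nnegrE ?mulr_ge0 ?sqrtr_ge0 ?vnorm_ge0 //.
by rewrite exprMn sqr_sqrtr // !vnorm_sqr -vdot_gram lambda_min_rayleigh ?trmx_gram.
Qed.

Section QuadraticMap.
Variables (R : realType) (n m : nat) (As : 'I_m -> 'M[R]_n) (A : 'M[R]_(n, m)).
Hypothesis symAs : forall i, (As i)^T = As i.
Implicit Types (x z h g : 'cV[R]_n) (y e w : 'cV[R]_m).

Local Notation F := (quadmap As A).

Definition jac x h : 'cV[R]_m := \col_i vdot (As i *m x + col i A) h.
Definition jacT x w : 'cV[R]_n := \sum_i w i 0 *: (As i *m x + col i A).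
Definition hess h : 'cV[R]_m := \col_i vdot h (As i *m h).

Lemma quadmap_coord x i :
  F x i 0 = 2^-1 * vdot x (As i *m x) + vdot (col i A) x.
Proof. by rewrite mxE /vdot mulmxA. Qed.

Lemma quadmapD x h : F (x + h) = F x + jac x h + 2^-1 *: hess h.
Proof.
apply/matrixP => i j; rewrite ord1 quadmap_coord [X in _ = X]mxE [X in _ = X + _]mxE.
rewrite [jac _ _ _ _]mxE [X in _ = _ + X]mxE [hess _ _ _]mxE quadmap_coord.
rewrite vdot_sym_mulmxD // vdotDr vdotDl (vdotC (As i *m x) h); by field.
Qed.

Lemma jacZ x a h : jac x (a *: h) = a *: jac x h.
Proof. by apply/matrixP => i j; rewrite !mxE vdotZr. Qed.

Lemma hessZ a h : hess (a *: h) = a ^+ 2 *: hess h.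
Proof. by apply/matrixP => i j; rewrite !mxE -scalemxAr vdotZl vdotZr mulrA -expr2. Qed.

Lemma vdot_jac x e h : vdot e (jac x h) = vdot (jacT x e) h.
Proof. by rewrite vdot_suml vdotE; apply: eq_bigr => i _; rewrite mxE vdotZl. Qed.

Lemma jacTE x w : jacT x w = \sum_i w i 0 *: (As i *m x) + A *m w.
Proof.
have -> : A *m w = \sum_i w i 0 *: col i A.
  apply/matrixP => j k; rewrite ord1 summxE !mxE; apply: eq_bigr => i _.
  by rewrite !mxE mulrC.
by rewrite /jacT -big_split /=; apply: eq_bigr => i _; rewrite scalerDr.
Qed.

Lemma cV_continuous_quadmap : cV_continuous_vec F.
Proof.
move=> i; apply: (eq_cV_continuous (f := fun x =>
  2^-1 * vdot x (As i *m x) + vdot (col i A) x)); first by move=> x; rewrite quadmap_coord.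
apply: cV_continuousD; first apply: cV_continuousM; first exact: cV_continuous_cst.
  apply: cV_continuous_vdot; first exact: cV_continuous_id.
  by apply: cV_continuous_mulmx; exact: cV_continuous_id.
apply: cV_continuous_vdot; [exact: cV_continuous_vec_cst | exact: cV_continuous_id].
Qed.

Lemma quadmap_descent x y : F x - y != 0 ->
  exists2 C, 0 <= C & forall t, 0 <= t ->
    2 * t * vnorm (jacT x (F x - y)) ^+ 2 <= vnorm (F x - y) ^+ 2 ->
    vnorm (F (x - t *: jacT x (F x - y)) - y) <=
      vnorm (F x - y) - t * (vnorm (jacT x (F x - y)) ^+ 2 / vnorm (F x - y)) + t ^+ 2 * C.
Proof.
set e := F x - y; set g := jacT x e; set u := jac x g => e0.
have eu : vdot e u = vnorm g ^+ 2 by rewrite vdot_jac vnorm_sqr.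
exists (vdot u u / vnorm e + vnorm (hess g)).
  by rewrite addr_ge0 ?vnorm_ge0 // divr_ge0 ?vdot_ge0 ?vnorm_ge0.
move=> t t0 ht.
have -> : F (x - t *: g) - y = (e - t *: u) + t ^+ 2 *: (2^-1 *: hess g).
  rewrite -scaleNr quadmapD jacZ hessZ sqrrN scalerA [2^-1 * _]mulrC -scalerA scaleNr.
  by rewrite addrAC [X in X + _]addrAC.
apply: le_trans (ler_vnormD _ _) _.
rewrite vnormZ ger0_norm ?sqr_ge0 // vnormZ ger0_norm ?invr_ge0 // mulrDr addrA.
apply: lerD; first by rewrite -eu; apply: vnorm_descent; rewrite // eu -vnorm_sqr.
apply: ler_wpM2l; first exact: sqr_ge0.
by rewrite ler_piMl ?vnorm_ge0 // invf_le1 ?ler1n.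
Qed.

(* If [F x <> y], a small step along [- jacT x (F x - y)] decreases
   [vnorm (F - y)] at rate at least [mu > c], beating the penalty [c * vnorm h]. *)
Lemma penalty_min_root x y c mu s : 0 < c -> c < mu -> 0 < s ->
  (forall w, mu * vnorm w <= vnorm (jacT x w)) ->
  (forall h, vnorm h <= s -> vnorm (F x - y) <= vnorm (F (x + h) - y) + c * vnorm h) ->
  F x = y.
Proof.
move=> c0 cmu s0 jac_lb loc_min.
have [/eqP|e0] := eqVneq (F x - y) 0; first by rewrite subr_eq0 => /eqP.
exfalso.
have [C C0 descent] := quadmap_descent e0; have G_ge := jac_lb (F x - y).
set e := F x - y in e0 descent G_ge loc_min; set g := jacT x e in descent G_ge.
set E := vnorm e in descent G_ge loc_min; set G := vnorm g in descent G_ge.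
have E0 : 0 < E by rewrite /E vnorm_gt0.
have G0 : 0 < G by apply: lt_le_trans G_ge; rewrite mulr_gt0 // (lt_trans c0).
set a := G ^+ 2 / E.
have aE : a * E = G ^+ 2 by rewrite mulrVK // unitfE gt_eqF.
have a_ge : mu * G <= a by rewrite -(ler_pM2r E0) aE expr2 mulrAC ler_pM2r.
pose t := Num.min (E ^+ 2 / (2 * G ^+ 2)) (Num.min (s / G) ((mu - c) * G / (C + 1))).
have t0 : 0 < t.
  by rewrite !lt_min !divr_gt0 ?mulr_gt0 ?exprn_gt0 ?subr_gt0 // ltr_wpDl.
have t1 : 2 * t * G ^+ 2 <= E ^+ 2.
  have : t * (2 * G ^+ 2) <= E ^+ 2.
    by rewrite -ler_pdivlMr ?mulr_gt0 ?exprn_gt0 // ge_min lexx.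
  by rewrite mulrCA mulrA.
have t2 : t * G <= s by rewrite -ler_pdivlMr // !ge_min lexx !orbT.
have t3 : t * C < (mu - c) * G.
  apply: lt_le_trans (_ : t * (C + 1) <= _).
    by rewrite ltr_pM2l // ltrDl.
  by rewrite -ler_pdivlMr ?ltr_wpDl // !ge_min lexx !orbT.
have := loc_min (- t *: g).
rewrite vnormZ normrN gtr0_norm // -/G => /(_ t2).
rewrite scaleNr => le_step; have := descent t (ltW t0) t1; rewrite -/a => step.
have : t * a <= t * (t * C + c * G) by lra.
rewrite ler_pM2l // => a_le; lra.
Qed.

(* The penalty [vnorm (F x - y) + c * vnorm (x - z)] attains its minimum on the
   closed ball, in the interior since its value at [z] is below [c * r]. *)
Lemma quadmap_root_in_ball z y r c mu : 0 < c -> c < mu ->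
  vnorm (F z - y) < c * r ->
  (forall x, vnorm (x - z) <= r -> forall w, mu * vnorm w <= vnorm (jacT x w)) ->
  exists2 x, vnorm (x - z) <= r & F x = y.
Proof.
move=> c0 cmu Fz jac_lb.
have r0 : 0 < r by rewrite -(pmulr_rgt0 _ c0); apply: le_lt_trans Fz; exact: vnorm_ge0.
have shiftD x h : vnorm (x + h - z) <= vnorm (x - z) + vnorm h.
  by rewrite addrAC; apply: ler_vnormD.
pose psi x := vnorm (F x - y) + c * vnorm (x - z).
pose ball x := vnorm (x - z) - r.
have cdist : cV_continuous (fun x => vnorm (x - z)).
  by apply/cV_continuous_vnorm/cV_continuous_vecB;
    [exact: cV_continuous_id | exact: cV_continuous_vec_cst].
have cpsi : cV_continuous psi.
  apply: cV_continuousD; last by apply: cV_continuousM => //; exact: cV_continuous_cst.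
  by apply/cV_continuous_vnorm/cV_continuous_vecB;
    [exact: cV_continuous_quadmap | exact: cV_continuous_vec_cst].
have cball : cV_continuous ball by apply: cV_continuousB => //; exact: cV_continuous_cst.
have ballP x : ball x <= 0 <-> vnorm (x - z) <= r by rewrite subr_le0.
have ball_bnd x : ball x <= 0 -> vnorm x <= r + vnorm z.
  by move/ballP => xz; have := shiftD x z; rewrite addrK; lra.
have ball_z : ball z <= 0 by apply/ballP; rewrite subrr vnorm0; lra.
have [xs /ballP xs_ball xs_min] := cV_EVT_min cpsi cball (ex_intro _ z ball_z) ball_bnd.
have xs_in : vnorm (xs - z) < r.
  have := xs_min z ball_z; rewrite /psi subrr vnorm0 mulr0 addr0 => psi_le.
  rewrite -(ltr_pM2l c0); have := vnorm_ge0 (F xs - y); lra.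
exists xs => //.
apply: (penalty_min_root (s := r - vnorm (xs - z)) c0 cmu); rewrite ?subr_gt0 //.
  exact: jac_lb.
move=> h hs; have xsh : ball (xs + h) <= 0 by apply/ballP; have := shiftD xs h; lra.
have := xs_min _ xsh; rewrite /psi; have := shiftD xs h.
by have := ltW c0; nra.
Qed.

End QuadraticMap.

Section QuadraticMapBounds.
Variables (R : realType) (n m : nat) (As : 'I_m -> 'M[R]_n) (A : 'M[R]_(n, m)).
Variable L : R.
Hypotheses (L_gt0 : 0 < L)
  (sum_sqr_le : forall x, \sum_i vdot (As i *m x) (As i *m x) <= L ^+ 2 * vdot x x)
  (symAs : forall i, (As i)^T = As i) (m_gt0 : (0 < m)%N).
Implicit Types (x d : 'cV[R]_n) (w : 'cV[R]_m).

Lemma vnorm_hess_le d : vnorm (hess As d) <= L * vdot d d.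
Proof.
apply: vnorm_le_sqr; first by rewrite mulr_ge0 ?vdot_ge0 // ltW.
rewrite vdotE.
apply: le_trans (_ : \sum_i vdot d d * vdot (As i *m d) (As i *m d) <= _).
  by apply: ler_sum => i _; rewrite mxE -expr2 vdot_CauchySchwarz.
have -> : (L * vdot d d) ^+ 2 = vdot d d * (L ^+ 2 * vdot d d) by ring.
by rewrite -mulr_sumr ler_wpM2l ?vdot_ge0.
Qed.

Lemma jacT_lower x eps w : vnorm x <= eps ->
  (sigma_min A - L * eps) * vnorm w <= vnorm (jacT As A x w).
Proof.
move=> x_le; rewrite jacTE.
set S := \sum_i w i 0 *: (As i *m x).
have AwS : vnorm (A *m w) <= vnorm (S + A *m w) + vnorm S.
  by have := ler_vnormD (S + A *m w) (- S); rewrite vnormN addrAC subrr add0r.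
have S_le : vnorm S <= vnorm w * (L * eps).
  apply: le_trans (vnorm_lincomb_le _ _) _; apply: ler_wpM2l; first exact: vnorm_ge0.
  apply: le_trans (_ : Num.sqrt ((L * vnorm x) ^+ 2) <= _).
    by apply: ler_wsqrtr; rewrite exprMn vnorm_sqr sum_sqr_le.
  rewrite sqrtr_sqr ger0_norm ?mulr_ge0 ?vnorm_ge0 ?(ltW L_gt0) //.
  by apply: ler_wpM2l => //; exact: ltW.
have := sigma_min_le A w m_gt0; have := vnorm_ge0 w; nra.
Qed.

Lemma quadmap_lerp x d l :
  quadmap As A (x + l *: d) - (l *: quadmap As A (x + d) + (1 - l) *: quadmap As A x)
  = - (l * (1 - l) / 2) *: hess As d.
Proof.
rewrite !quadmapD // jacZ hessZ.
by apply/matrixP => i j; rewrite !mxE; ring.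
Qed.

Lemma quadmap_lerp_in_ball eps l x1 x2 : eps < sigma_min A / (2 * L) ->
  0 <= l <= 1 -> vnorm x1 <= eps -> vnorm x2 <= eps ->
  exists2 x, vnorm x <= eps &
    quadmap As A x = l *: quadmap As A x1 + (1 - l) *: quadmap As A x2.
Proof.
move=> eps_lt /andP[l0 l1] x1_le x2_le.
set y := _ + _; set d := x1 - x2; set z := x2 + l *: d.
set s := l * (1 - l); set D := vdot d d.
have s0 : 0 <= s by rewrite mulr_ge0 // subr_ge0.
have D0 : 0 <= D := vdot_ge0 d.
have eps0 : 0 <= eps := le_trans (vnorm_ge0 x1) x1_le.
have x1E : x2 + d = x1 by rewrite addrC subrK.
have resid_le : vnorm (quadmap As A z - y) <= s / 2 * (L * D).
  rewrite /y -x1E quadmap_lerp vnormZ normrN ger0_norm ?divr_ge0 //.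
  by apply: ler_wpM2l; rewrite ?divr_ge0 ?vnorm_hess_le.
have sqr_le x : vnorm x <= eps -> vdot x x <= eps ^+ 2.
  by move=> x_le; rewrite -vnorm_sqr; have := vnorm_ge0 x; nra.
have z_sqr : vdot z z <= eps ^+ 2 - s * D.
  rewrite /z vdot_lerp x1E -/D.
  by have := sqr_le _ x1_le; have := sqr_le _ x2_le; rewrite /s; nra.
have [sD0|sD_gt0] := leP (s * D) 0.
  exists z; first by apply: vnorm_le_sqr => //; have := mulr_ge0 s0 D0; lra.
  apply/eqP; rewrite -subr_eq0 -vnorm_eq0 eq_le vnorm_ge0 andbT.
  apply: le_trans resid_le _; have sD : s * D = 0 by have := mulr_ge0 s0 D0; lra.
  have -> : s / 2 * (L * D) = s * D * (L / 2) by ring.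
  by rewrite sD mul0r.
have zz0 := vdot_ge0 z.
have nz0 := vnorm_ge0 z.
have nz_sqr : vnorm z ^+ 2 <= eps ^+ 2 - s * D by rewrite vnorm_sqr.
set r := eps - vnorm z.
have r0 : 0 < r by rewrite subr_gt0; nra.
have sD_le : s * D <= 2 * eps * r by rewrite /r; nra.
have in_ball x : vnorm (x - z) <= r -> vnorm x <= eps.
  by rewrite /r => xz; have := ler_vnormD (x - z) z; rewrite subrK; lra.
have Leps : L * eps * 2 < sigma_min A.
  by move: eps_lt; rewrite ltr_pdivlMr ?mulr_gt0 //; lra.
set mu := sigma_min A - L * eps; set c := (L * eps + mu) / 2.
have Leps0 : 0 <= L * eps by rewrite mulr_ge0 // ltW.
have [x xz Fx] : exists2 x, vnorm (x - z) <= r & quadmap As A x = y.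
  apply: (@quadmap_root_in_ball _ _ _ As A symAs z y r c mu).
  - by rewrite /c /mu; lra.
  - by rewrite /c /mu; lra.
  - apply: le_lt_trans resid_le _.
    apply: le_lt_trans (_ : L * eps * r < c * r); last by rewrite ltr_pM2r // /c /mu; lra.
    by have := ltW L_gt0; nra.
  - by move=> x /in_ball x_le w; exact: jacT_lower.
by exists x => //; exact: in_ball.
Qed.

End QuadraticMapBounds.

Theorem theorem2 (R : realType) (n m : nat) (As : 'I_m -> 'M[R]_n)
  (A : 'M[R]_(n, m)) :
  (0 < n)%N -> (0 < m)%N ->
  (forall i, (As i)^T = As i) ->
  let L := Num.sqrt (\sum_(i < m) spec_norm (As i) ^+ 2) in
  let Lnew := Num.sqrt (lambda_max (\sum_(i < m) (As i)^T *m As i)) in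
  let nu := sigma_min A in
  0 < Lnew ->
  Lnew <= L /\
  (forall eps : R, eps < nu / (2 * Lnew) ->
     convex_set (Fset As A eps : set (convex_lmodType 'cV[R]_m))).
Proof.
move=> n_gt0 m_gt0 symAs L Lnew nu Lnew_gt0.
have sum_sqr_le x : \sum_i vdot (As i *m x) (As i *m x) <= Lnew ^+ 2 * vdot x x.
  rewrite sqr_sqrtr ?lambda_max_sum_gram_ge0 // -vdot_sum_gram.
  by have [_] := lambda_max_rayleigh n_gt0 (trmx_sum_gram As); apply.
split.
  apply: ler_wsqrtr; apply: le_trans (lambda_max_sum_le n_gt0 (fun i => trmx_gram _)) _.
  by apply: ler_sum => i _; rewrite /spec_norm sqr_sqrtr ?lambda_max_gram_ge0.
move=> eps eps_lt p1 p2 l; rewrite !inE /Fset /=.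
move=> [x1 + <-] [x2 + <-]; rewrite !enorm_vnorm => x1_le x2_le.
have l01 : 0 <= l%:num <= 1 by rewrite ge0 le1.
have [x x_le Fx] :=
  quadmap_lerp_in_ball Lnew_gt0 sum_sqr_le symAs m_gt0 eps_lt l01 x1_le x2_le.
by exists x; rewrite ?enorm_vnorm.
Qed.
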